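(* Let $\tau$ be an importance-inducing cooperative game mapping and $\mathfrak E$ an expectation of contributions. Then $\mathfrak E\circ\tau$, defined by $(\mathfrak E\circ\tau)_x(f)=\mathfrak E_x(\tau_f)$, is an importance value function. If $\tau$ is unbiased (resp. derivative dependent), then so is $\mathfrak E\circ\tau$. If $\tau$ is chain-rule decomposable (resp. weakly chain-rule decomposable), then so is $\mathbf{Bz}\circ\tau$.
   Context: $X$ is a fixed finite set of $n=|X|$ variables. An assignment over $U\subseteq X$ is a map $\mathbf u:U\to\{0,1\}$; $\mathbf u;\mathbf v$ is concatenation of assignments with disjoint domains, $\mathbf u_S$ is restriction. For $S\subseteq X$ and $\mathbf u$ over $X$, $\mathbf u^{\oplus S}$ flips the values of the variables in $S$. $\mathbb B(X)$ is the set of Boolean functions $\{0,1\}^X\to\{0,1\}$, combined pointwise by $\lor,\land$ (juxtaposition), $\oplus$, negation $\overline f$; a variable $x$ also denotes $\mathbf u\mapsto\mathbf u(x)$; $f\ge g$ is pointwise. Cofactor: $f_{\mathbf v}(\mathbf u)=f(\mathbf v;\mathbf u_{X\setminus V})$ for $\mathbf v$ over $V$; $f_{x/c}$ for $V=\{x\}$. $\mathrm{dep}(f)=\{x: f_{x/1}\ne f_{x/0}\}$; $f$ is monotone in $x$ if $f_{x/1}\ge f_{x/0}$. $f^{\oplus y}(\mathbf u)=f(\mathbf u^{\oplus\{y\}})$. For a permutation $\sigma$ of $X$: $(\sigma\mathbf u)(x)=\mathbf u(\sigma^{-1}(x))$, $(\sigma f)(\mathbf u)=f(\sigma^{-1}\mathbf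 u)$. $f[x/s]=s f_{x/1}\lor\overline s f_{x/0}$; $\mathrm D_xf=f_{x/1}\oplus f_{x/0}$. Modularity: $f$ is modular in $g$ if $g$ is not constant and there are $\ell\in\mathbb B(X)$, $z\in X$ with $\mathrm{dep}(\ell)\cap\mathrm{dep}(g)=\emptyset$ and $f=\ell[z/g]$; monotonically modular if moreover $\ell$ is monotone in $z$. Then $f_{g/1}:=\ell_{z/1}$, $f_{g/0}:=\ell_{z/0}$ (well defined), and for a variable $w$, $f[g/w]:=w f_{g/1}\lor\overline w f_{g/0}$. Value functions and IVFs: a value function is a map $\mathfrak I:X\times\mathbb B(X)\to\mathbb R$. It is an importance value function (IVF) if for all $x,y\in X$, permutations $\sigma$, $f,g,h$: (Bound) $0\le\mathfrak I_x(f)\le1$; (Dum) $\mathfrak I_x(f)=0$ if $x\notin\mathrm{dep}(f)$; (Dic) $\mathfrak I_x(x)=\mathfrak I_x(\overline x)=1$; (Type) $\mathfrak I_x(f)=\mathfrak I_{\sigma(x)}(\sigma f)$ and $\mathfrak I_x(f)=\mathfrak I_x(f^{\oplus y})$; (ModEC) $\mathfrak I_x(f)\ge\mathfrak I_x(h)$ whenever $f,h$ are monotonically modular in $g$, $f_{g/1}\ge h_{g/1}$, $h_{g/0}\ge f_{g/0}$, $x\in\mathrm{dep}(g)$. Unbiased: $\mathfrak I_x(g)=\mathfrak I_x(\overline g)$. Derivative dependent: $\mathrm D_xf\ge\mathrm D_xg\Rightarrow\mathfrak I_x(f)\ge\mathfrak I_x(g)$. Chain-rule decomposable: for $f$ modular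 in $g$ and $x\in\mathrm{dep}(g)$, $\mathfrak I_x(f)=\mathfrak I_x(g)\,\mathfrak I_{x_g}(f[g/x_g])$ for a variable $x_g\notin\mathrm{dep}(f)$; weakly: only for $f$ monotonically modular in $g$. Cooperative games: a cooperative game is $v:2^X\to\mathbb R$; $\mathbb G(X)$ is the set of all of them; they are combined pointwise and compared pointwise. $\partial_xv(S)=v(S\cup\{x\})-v(S\setminus\{x\})$. A cooperative game mapping (CGM) is a map $\tau:\mathbb B(X)\to\mathbb G(X)$, $f\mapsto\tau_f$. It is importance inducing if for all $x,y\in X$, permutations $\sigma$ and $f,g,h$: (Bound$_{CG}$) $0\le\partial_x\tau_f\le1$; (Dum$_{CG}$) $\partial_x\tau_f=0$ if $x\notin\mathrm{dep}(f)$; (Dic$_{CG}$) $\partial_x\tau_x=\partial_x\tau_{\overline x}=1$; (Type$_{CG}$) $\tau_f(S)=\tau_{\sigma f}(\sigma(S))$ and $\tau_f(S)=\tau_{f^{\oplus y}}(S)$ for all $S\subseteq X$; (ModEC$_{CG}$) $\partial_x\tau_f\ge\partial_x\tau_h$ whenever $f,h$ are monotonically modular in $g$, $f_{g/1}\ge h_{g/1}$, $h_{g/0}\ge f_{g/0}$, $x\in\mathrm{dep}(g)$. $\tau$ is unbiased if $\tau_g=\tau_{\overline g}$ for all $g$; derivative dependent if $\mathrm D_xf\ge\mathrm D_xg\Rightarrow\partial_x\tau_f\ge\partial_x\tau_g$; chain-rule decomposable if for all $f$ modular in $g$ and $x\in\mathrm{dep}(g)$: $\partial_x\tau_f=(\partial_x\tau_g)(\partial_g\tau_f)$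 with $\partial_g\tau_f:=\partial_{x_g}\tau_{f[g/x_g]}$ for a variable $x_g\notin\mathrm{dep}(f)$; weakly chain-rule decomposable if this holds whenever $f$ is monotonically modular in $g$. An expectation of contributions is a map $\mathfrak E:X\times\mathbb G(X)\to\mathbb R$ for which there are nonnegative weights $c(0),\dots,c(n-1)$ with $\sum_{S\subseteq X\setminus\{x\}}c(|S|)=1$ and $\mathfrak E_x(v)=\sum_{S\subseteq X\setminus\{x\}}c(|S|)\,\partial_xv(S)$ for all $v,x$. The Banzhaf value $\mathbf{Bz}$ is the expectation of contributions with $c(k)=2^{-(n-1)}$. *)

From HB Require Import structures.
From mathcomp Require Import all_boot all_order fingroup perm all_algebra.
Set Implicit Arguments. Unset Strict Implicit. Unset Printing Implicit Defensive.
Import Order.TTheory GRing.Theory Num.Theory.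
Local Open Scope ring_scope.

Section BoolFun.
Variable X : finType.

Definition asg := {ffun X -> bool}.
Definition bfun := {ffun asg -> bool}.

Definition setv (u : asg) (x : X) (c : bool) : asg :=
  [ffun y => if y == x then c else u y].
Definition flipv (u : asg) (S : {set X}) : asg :=
  [ffun y => if y \in S then ~~ u y else u y].

Definition cof (f : bfun) (x : X) (c : bool) : bfun := [ffun u : asg => f (setv u x c)].
Definition dep (f : bfun) : {set X} := [set x | cof f x true != cof f x false].
Definition bvar (x : X) : bfun := [ffun u : asg => u x].
Definition bneg (f : bfun) : bfun := [ffun u : asg => ~~ f u].
Definition ble (f g : bfun) : Prop := forall u, f u ==> g u.
Definition monotone_in (f : bfun) (x : X) : Prop := ble (cof f x false) (cof f x true).
Definition flipf (f : bfun) (y : X) : bfun := [ffun u : asg => f (flipv u [set y])].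
Definition permA (s : {perm X}) (u : asg) : asg := [ffun x => u ((s^-1)%g x)].
Definition permF (s : {perm X}) (f : bfun) : bfun := [ffun u : asg => f (permA (s^-1)%g u)].
Definition subst (f : bfun) (x : X) (s : bfun) : bfun :=
  [ffun u : asg => (s u && cof f x true u) || (~~ s u && cof f x false u)].
Definition deriv (x : X) (f : bfun) : bfun := [ffun u : asg => addb (cof f x true u) (cof f x false u)].

Definition nonconstant (g : bfun) : Prop := exists u v, g u != g v.

(* (l, z) witnesses that f is modular in g: f = l[z/g] *)
Definition mod_wit (f g l : bfun) (z : X) : Prop :=
  [/\ nonconstant g, [disjoint dep l & dep g] & f = subst l z g].
Definition monomod_wit (f g l : bfun) (z : X) : Prop :=
  mod_wit f g l z /\ monotone_in l z.
(* with witness (l,z): f_{g/1} = cof l z true, f_{g/0} = cof l z false, and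
   f[g/w] = w f_{g/1} \/ ~w f_{g/0} *)
Definition gsub (l : bfun) (z : X) (w : X) : bfun :=
  [ffun u : asg => (u w && cof l z true u) || (~~ u w && cof l z false u)].

Variable R : realFieldType.

Definition valfun := X -> bfun -> R.
Definition game := {set X} -> R.
Definition cgm := bfun -> game.

Record is_IVF (I : valfun) : Prop := {
  ivf_bound : forall x f, 0 <= I x f <= 1;
  ivf_dum : forall x f, x \notin dep f -> I x f = 0;
  ivf_dic : forall x, I x (bvar x) = 1 /\ I x (bneg (bvar x)) = 1;
  ivf_type_perm : forall x (s : {perm X}) f, I x f = I (s x) (permF s f);
  ivf_type_flip : forall x y f, I x f = I x (flipf f y);
  ivf_modec : forall x f h g l1 z1 l2 z2,
      monomod_wit f g l1 z1 -> monomod_wit h g l2 z2 ->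
      ble (cof l2 z2 true) (cof l1 z1 true) ->
      ble (cof l1 z1 false) (cof l2 z2 false) ->
      x \in dep g -> I x h <= I x f }.

Definition unbiased_vf (I : valfun) : Prop := forall x g, I x g = I x (bneg g).
Definition derdep_vf (I : valfun) : Prop :=
  forall x f g, ble (deriv x g) (deriv x f) -> I x g <= I x f.
Definition crd_vf (I : valfun) : Prop :=
  forall f g l z x xg, mod_wit f g l z -> x \in dep g -> xg \notin dep f ->
    I x f = I x g * I xg (gsub l z xg).
Definition wcrd_vf (I : valfun) : Prop :=
  forall f g l z x xg, monomod_wit f g l z -> x \in dep g -> xg \notin dep f ->
    I x f = I x g * I xg (gsub l z xg).

Definition pd (x : X) (v : game) : game := fun S => v (S :|: [set x]) - v (S :\ x).

Record importance_inducing (tau : cgm) : Prop := {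
  cg_bound : forall x f S, 0 <= pd x (tau f) S <= 1;
  cg_dum : forall x f S, x \notin dep f -> pd x (tau f) S = 0;
  cg_dic : forall x S, pd x (tau (bvar x)) S = 1 /\ pd x (tau (bneg (bvar x))) S = 1;
  cg_type_perm : forall (s : {perm X}) f S, tau f S = tau (permF s f) (s @: S);
  cg_type_flip : forall y f S, tau f S = tau (flipf f y) S;
  cg_modec : forall x f h g l1 z1 l2 z2 S,
      monomod_wit f g l1 z1 -> monomod_wit h g l2 z2 ->
      ble (cof l2 z2 true) (cof l1 z1 true) ->
      ble (cof l1 z1 false) (cof l2 z2 false) ->
      x \in dep g -> pd x (tau h) S <= pd x (tau f) S }.

Definition unbiased_cgm (tau : cgm) : Prop := forall g S, tau g S = tau (bneg g) S.
Definition derdep_cgm (tau : cgm) : Prop :=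
  forall x f g S, ble (deriv x g) (deriv x f) -> pd x (tau g) S <= pd x (tau f) S.
Definition crd_cgm (tau : cgm) : Prop :=
  forall f g l z x xg S, mod_wit f g l z -> x \in dep g -> xg \notin dep f ->
    pd x (tau f) S = pd x (tau g) S * pd xg (tau (gsub l z xg)) S.
Definition wcrd_cgm (tau : cgm) : Prop :=
  forall f g l z x xg S, monomod_wit f g l z -> x \in dep g -> xg \notin dep f ->
    pd x (tau f) S = pd x (tau g) S * pd xg (tau (gsub l z xg)) S.

Definition is_expectation (E : X -> game -> R) : Prop :=
  exists c : nat -> R,
    [/\ forall k, (k < #|X|)%N -> 0 <= c k,
        forall x, \sum_(S : {set X} | x \notin S) c #|S| = 1
      & forall v x, E x v = \sum_(S : {set X} | x \notin S) c #|S| * pd x v S].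

Definition Bz (x : X) (v : game) : R :=
  \sum_(S : {set X} | x \notin S) ((2 ^+ (#|X|).-1)^-1 * pd x v S).

Definition compE (E : X -> game -> R) (tau : cgm) : valfun := fun x f => E x (tau f).

End BoolFun.

(* Every IVF axiom for E o tau follows from the corresponding axiom for tau
   because E_x(v) is a nonnegative combination of the contributions
   partial_x v(S) with total weight 1: it is monotone in the contributions,
   returns a contribution that is constant in S, and is equivariant under
   permutations of the variables.  The chain rule is special to Banzhaf: if
   f is modular in g = l[z/g], then tau g has carrier dep g while
   tau (f[g/x_g]) has a carrier disjoint from dep g (a Boolean lemma,
   [gsub_dep_disjoint]).  Contributions of a game only depend on the trace of
   S on a carrier, so the uniform average over all S of a product of two such
   contributions factors as the product of the averages ([Bz_mul]). *)
From HB Require Import structures.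
From mathcomp Require Import all_boot all_order fingroup perm all_algebra.
From mathcomp Require Import ring.
Set Implicit Arguments. Unset Strict Implicit. Unset Printing Implicit Defensive.
Import Order.TTheory GRing.Theory Num.Theory.

Section BooleanFunctions.
Variable X : finType.
Implicit Types (f g l : bfun X) (u v : asg X).

Lemma setvE u y c t : setv u y c t = if t == y then c else u t.
Proof. by rewrite ffunE. Qed.

Lemma setv_id u y : setv u y (u y) = u.
Proof. by apply/ffunP=> t; rewrite setvE; case: eqP => // ->. Qed.

Lemma setvK u y c d : setv (setv u y c) y d = setv u y d.
Proof. by apply/ffunP=> t; rewrite !setvE; case: eqP. Qed.

Lemma setvC u y z c d : y != z -> setv (setv u y c) z d = setv (setv u z d) y c.
Proof.
move=> yz; apply/ffunP=> t; rewrite !setvE.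
by case: (eqVneq t z) => [->|//]; rewrite eq_sym (negbTE yz).
Qed.

Lemma depP f y : reflect (forall u c, f (setv u y c) = f u) (y \notin dep f).
Proof.
rewrite inE negbK; apply: (iffP eqP) => [e u c | H]; last first.
  by apply/ffunP=> u; rewrite !ffunE !H.
have /= := congr1 (fun F : bfun X => F u) e; rewrite !ffunE => e2.
by rewrite -{2}(setv_id u y); case: c; case: (u y).
Qed.

Lemma dep_witness f y : y \in dep f -> exists u, f (setv u y true) != f (setv u y false).
Proof.
move=> yf; apply/existsP; apply: contraLR yf; rewrite negb_exists => /forallP H.
apply/depP=> u c; have /negPn/eqP e := H u.
by rewrite -{2}(setv_id u y); case: c; case: (u y); rewrite ?e.
Qed.

Lemma agree f u v : {in dep f, u =1 v} -> f u = f v.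
Proof.
move: {2}#|[set t | u t != v t]| (leqnn #|[set t | u t != v t]|) => n.
elim: n u => [|n IH] u hc ha.
  suff -> : u = v by [].
  apply/ffunP=> t; apply/eqP; apply: contraLR hc => ut.
  by rewrite -ltnNge card_gt0; apply/set0Pn; exists t; rewrite inE.
have [e|[y]] := set_0Vmem [set t | u t != v t].
  suff -> : u = v by [].
  by apply/ffunP=> t; move/setP: e => /(_ t); rewrite !inE => /negbFE/eqP.
rewrite inE => uy.
have yf : y \notin dep f by apply: contra uy => /ha ->.
rewrite -((depP _ _ yf) u (v y)); apply: IH; last first.
  by move=> t tf; rewrite setvE; case: (eqVneq t y) => [->|_]; last apply: ha.
rewrite -ltnS; apply: leq_trans hc; apply: proper_card; apply/properP; split.
  by apply/subsetP=> t; rewrite !inE setvE; case: (eqVneq t y) => [->|]; rewrite ?eqxx.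
by exists y; rewrite !inE // setvE eqxx negbK.
Qed.

Lemma cof_setv_mod f g l z y b c w : mod_wit f g l z -> y \in dep g ->
  cof l z b (setv w y c) = cof l z b w.
Proof.
case=> _ dis _ yg; rewrite !ffunE.
have [->|yz] := eqVneq y z; first by rewrite setvK.
by rewrite setvC //; apply/depP; rewrite (disjointFl dis yg).
Qed.

Lemma gsubE l z (w : X) u :
  gsub l z w u = (u w && cof l z true u) || (~~ u w && cof l z false u).
Proof. by rewrite [LHS]ffunE. Qed.

(* If z is essential in l, every essential variable of g is essential in
   f = l[z/g]: glue a witness for z in l with a witness for y in g. *)
Lemma dep_mod_essential f g l z y : mod_wit f g l z -> z \in dep l ->
  y \in dep g -> y \in dep f.
Proof.
case=> _ dis fe zl yg; have [u0 hu0] := dep_witness zl; have [v0 hv0] := dep_witness yg.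
pose w := [ffun t => if t \in dep g then v0 t else u0 t] : asg X.
have Hg c : g (setv w y c) = g (setv v0 y c).
  by apply: agree => t tg; rewrite !setvE !ffunE tg; case: eqP.
have Hl c b : l (setv (setv w y c) z b) = l (setv u0 z b).
  apply: agree => t tl; rewrite !setvE ffunE (disjointFr dis tl).
  case: eqP => // _; case: eqP => // ety; subst t.
  by rewrite (disjointFr dis tl) in yg.
apply: contraT => /depP yf; have := yf w true; rewrite -(yf w false) fe !ffunE !Hg !Hl.
by move: hu0 hv0; case: (l (setv u0 z true)); case: (l (setv u0 z false));
   case: (g (setv v0 y true)); case: (g (setv v0 y false)).
Qed.

Lemma gsub_dep_disjoint f g l z xg y : mod_wit f g l z -> xg \notin dep f ->
  y \in dep g -> y \notin dep (gsub l z xg).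
Proof.
move=> mw xf yg; apply/depP=> u c; rewrite !gsubE !(cof_setv_mod _ _ _ mw yg).
have [exy|nxy] := eqVneq xg y; last by rewrite setvE (negbTE nxy).
subst xg; have /depP zl : z \notin dep l.
  by apply: contra xf => zl; apply: dep_mod_essential mw zl yg.
have e w : cof l z true w = cof l z false w by rewrite !ffunE !zl.
by rewrite !e setvE eqxx; case: c; case: (u y); case: (cof l z false u).
Qed.

End BooleanFunctions.

Local Open Scope ring_scope.

Section Games.
Variables (X : finType) (R : realFieldType).
Implicit Types (v w : game X R) (S T D : {set X}).

Definition carrier v D : Prop := forall t S, t \notin D -> pd t v S = 0.

Lemma carrier_trace v D : carrier v D -> forall S, v S = v (S :&: D).
Proof.
move=> hD S; move: {2}#|S :\: D|%N (leqnn #|S :\: D|) => n.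
elim: n S => [|n IH] S hS.
  congr v; apply/setP=> y; apply/idP/idP => [yS|]; last by case/setIP.
  rewrite inE yS /=; apply: contraTT hS => yD; rewrite -ltnNge card_gt0.
  by apply/set0Pn; exists y; rewrite !inE yD.
have [e|[y]] := set_0Vmem (S :\: D).
  congr v; apply/setP=> t; move/setP: e => /(_ t); rewrite !inE.
  by case: (t \in S); case: (t \in D).
rewrite inE => /andP[yD yS].
have vy : v (S :|: [set y]) = v (S :\ y) by apply/eqP; rewrite -subr_eq0 -/(pd y v S) hD.
have -> : v S = v (S :\ y) by rewrite -vy; congr v; apply/setP=> t; rewrite !inE;
  case: (eqVneq t y) => [->|]; rewrite ?yS ?orbT ?orbF.
rewrite (IH (S :\ y)); last first.
  rewrite -ltnS; apply: leq_trans hS.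
  rewrite (cardsD1 y (S :\: D)) !inE yD yS /= add1n ltnS.
  by apply: subset_leq_card; apply/subsetP=> t; rewrite !inE => /andP[->] /andP[->].
congr v; apply/setP=> t; rewrite !inE.
by case: (eqVneq t y) => [->|]; rewrite ?(negbTE yD) ?andbF.
Qed.

Lemma pd_trace v D x : carrier v D ->
  forall S T, S :&: D = T :&: D -> pd x v S = pd x v T.
Proof.
move=> /carrier_trace H S T /setP e; rewrite /pd (H (S :|: _)) (H (S :\ _)).
rewrite (H (T :|: _)) (H (T :\ _)).
congr (v _ - v _); apply/setP=> y; have := e y; rewrite !inE;
  by case: (y \in S); case: (y \in T); case: (y \in D); case: (y == x).
Qed.

Lemma card_sets : #|{set X}| = (2 ^ #|X|)%N.
Proof. by rewrite -[#|{set X}|]cardsT -powersetT card_powerset cardsT. Qed.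

(* If a only depends on S :&: D and b only on S :&: ~: D, the pair (S, T)
   can be recombined into (S_D u T_~D, T_D u S_~D), so the product of the
   sums over all subsets is 2^|X| times the sum of the products. *)
Lemma sum_mul_split (a b : {set X} -> R) D :
  (forall S T, S :&: D = T :&: D -> a S = a T) ->
  (forall S T, S :&: ~: D = T :&: ~: D -> b S = b T) ->
  (\sum_S a S) * (\sum_S b S) = 2 ^+ #|X| * \sum_S a S * b S.
Proof.
move=> ha hb.
pose swap (p : {set X} * {set X}) :=
  ((p.1 :&: D) :|: (p.2 :&: ~: D), (p.2 :&: D) :|: (p.1 :&: ~: D)).
have swapK : involutive swap.
  by move=> [S T]; congr pair; apply/setP=> y; rewrite !inE;
     case: (y \in D); case: (y \in S); case: (y \in T).
rewrite big_distrlr /= pair_bigA /= (reindex_inj (inv_inj swapK)) /=.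
transitivity (\sum_(p : {set X} * {set X}) a p.1 * b p.1).
  apply: eq_bigr => [[S T]] _ /=; congr (_ * _); [apply: ha | apply: hb];
  by apply/setP=> y; rewrite !inE; case: (y \in D); case: (y \in S); case: (y \in T).
rewrite -(pair_bigA _ (fun S T => a S * b S)) /= big_distrr /=.
by apply: eq_bigr => S _; rewrite sumr_const card_sets -[in LHS]mulr_natl natrX.
Qed.

Definition toggle (x : X) S : {set X} := [set y | (y == x) (+) (y \in S)].

Lemma toggleK x : involutive (toggle x).
Proof. by move=> S; apply/setP=> y; rewrite !inE addbA addbb. Qed.

Lemma pd_toggle x v S : pd x v (toggle x S) = pd x v S.
Proof.
rewrite /pd; congr (v _ - v _); apply/setP=> y; rewrite !inE;
  by case: (y == x); case: (y \in S).
Qed.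

Lemma BzE x v : Bz x v = (2 ^+ #|X|)^-1 * \sum_S pd x v S.
Proof.
have n0 : (0 < #|X|)%N by apply/card_gt0P; exists x.
rewrite /Bz -big_distrr /= (bigID (fun S => x \notin S) predT) /=.
rewrite [Y in _ + Y](reindex_inj (inv_inj (toggleK x))) /=.
have -> : \sum_(S : {set X} | ~~ (x \notin toggle x S)) pd x v (toggle x S) =
          \sum_(S : {set X} | x \notin S) pd x v S.
  by apply: eq_big => [S|S _]; [rewrite !inE eqxx negbK | exact: pd_toggle].
rewrite -(prednK n0) exprS /=.
have h2 : (2 : R) ^+ #|X|.-1 != 0 by rewrite expf_neq0 // pnatr_eq0.
by field.
Qed.

Lemma Bz_mul x y v w1 w2 D : carrier w1 D -> carrier w2 (~: D) ->
  (forall S, pd x v S = pd x w1 S * pd y w2 S) -> Bz x v = Bz x w1 * Bz y w2.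
Proof.
move=> c1 c2 H; rewrite !BzE; under eq_bigr do rewrite H.
rewrite mulrACA (sum_mul_split (pd_trace x c1) (pd_trace y c2)).
have h : (2 : R) ^+ #|X| != 0 by rewrite expf_neq0 // pnatr_eq0.
by field.
Qed.

End Games.

Section Expectation.
Variables (X : finType) (R : realFieldType) (E : X -> game X R -> R).
Hypothesis hE : is_expectation E.
Implicit Types (v w : game X R) (S : {set X}).

(* Only weights c(k) with k < |X| are constrained; these are the ones used. *)
Lemma weight_ge0 (c : nat -> R) x S :
  (forall k, (k < #|X|)%N -> 0 <= c k) -> x \notin S -> 0 <= c #|S|.
Proof.
move=> c0 xS; apply: c0; rewrite -[#|X|]cardsT; apply: proper_card.
by rewrite properT; apply: contraNneq xS => ->; rewrite inE.
Qed.

Lemma expectation_le x v w : (forall S, pd x v S <= pd x w S) -> E x v <= E x w.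
Proof.
have [c [c0 _ cE]] := hE; move=> H; rewrite !cE; apply: ler_sum => S xS.
by apply: ler_wpM2l; [exact: weight_ge0 c0 xS | exact: H].
Qed.

Lemma expectation_eq x v w : (forall S, pd x v S = pd x w S) -> E x v = E x w.
Proof. by move=> H; apply/eqP; rewrite eq_le !expectation_le // => S; rewrite H. Qed.

Lemma expectation_const x v a : (forall S, pd x v S = a) -> E x v = a.
Proof.
have [c [_ c1 cE]] := hE; move=> H; rewrite cE -[RHS]mul1r -(c1 x) big_distrl.
by apply: eq_bigr => S _; rewrite H.
Qed.

Lemma expectation_bound x v : (forall S, 0 <= pd x v S <= 1) -> 0 <= E x v <= 1.
Proof.
have [c [c0 c1 cE]] := hE; move=> H; rewrite cE; apply/andP; split.
  by apply: sumr_ge0 => S xS; rewrite mulr_ge0 ?(weight_ge0 c0 xS) //; case/andP: (H S).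
rewrite -(c1 x); apply: ler_sum => S xS; rewrite -{2}[c #|S|]mulr1.
by apply: ler_wpM2l; [exact: weight_ge0 c0 xS | case/andP: (H S)].
Qed.

Lemma imsetD1_perm (s : {perm X}) S x : s @: (S :\ x) = s @: S :\ s x.
Proof.
apply/setP=> y; rewrite -(permKV s y) !inE !(mem_imset _ _ (@perm_inj _ s)) !inE.
by rewrite (inj_eq (@perm_inj _ s)).
Qed.

Lemma expectation_perm (s : {perm X}) x v w :
  (forall S, v S = w (s @: S)) -> E x v = E (s x) w.
Proof.
have [c [_ _ cE]] := hE; move=> H; rewrite !cE.
rewrite [RHS](reindex_inj (imset_inj (@perm_inj _ s))) /=.
apply: eq_big => [S|S xS]; first by rewrite (mem_imset _ _ (@perm_inj _ s)).
rewrite (card_imset _ (@perm_inj _ s)) /pd -imsetD1_perm -imset_set1 -imsetU.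
by rewrite !H.
Qed.

End Expectation.

Section Composition.
Variables (X : finType) (R : realFieldType) (tau : cgm X R).
Hypothesis ii : importance_inducing tau.

Lemma cgm_carrier f : carrier (tau f) (dep f).
Proof. by move=> t S; apply: (cg_dum ii). Qed.

Lemma compE_IVF (E : X -> game X R -> R) : is_expectation E -> is_IVF (compE E tau).
Proof.
move=> hE; split; rewrite /compE.
- by move=> x f; apply: (expectation_bound hE) => S; apply: (cg_bound ii).
- by move=> x f xf; apply: (expectation_const hE) => S; apply: (cg_dum ii).
- by move=> x; split; apply: (expectation_const hE) => S; case: (cg_dic ii x S).
- by move=> x s f; apply: (expectation_perm hE) => S; apply: (cg_type_perm ii).
- by move=> x y f; apply: (expectation_eq hE) => S; rewrite /pd !(cg_type_flip ii y f).
- move=> x f h g l1 z1 l2 z2 m1 m2 le1 le0 xg; apply: (expectation_le hE) => S.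
  exact: (cg_modec ii S m1 m2 le1 le0 xg).
Qed.

Lemma compBz_chain f g l z x xg : mod_wit f g l z -> xg \notin dep f ->
  (forall S, pd x (tau f) S = pd x (tau g) S * pd xg (tau (gsub l z xg)) S) ->
  compE (@Bz X R) tau x f =
    compE (@Bz X R) tau x g * compE (@Bz X R) tau xg (gsub l z xg).
Proof.
move=> mw xf H; rewrite /compE; apply: (Bz_mul (@cgm_carrier g) _ H) => t S.
by rewrite inE negbK => tg; apply: (@cgm_carrier _ t S (gsub_dep_disjoint mw xf tg)).
Qed.

End Composition.

Theorem mainTheorem11 (R : realFieldType) (X : finType)
  (tau : cgm X R) (E : X -> game X R -> R) :
  importance_inducing tau -> is_expectation E ->
  [/\ is_IVF (compE E tau),
      unbiased_cgm tau -> unbiased_vf (compE E tau),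
      derdep_cgm tau -> derdep_vf (compE E tau),
      crd_cgm tau -> crd_vf (compE (@Bz X R) tau)
    & wcrd_cgm tau -> wcrd_vf (compE (@Bz X R) tau)].
Proof.
move=> ii hE; split.
- exact: compE_IVF.
- by move=> ub x g; apply: (expectation_eq hE) => S; rewrite /pd !(ub g).
- by move=> dd x f g H; apply: (expectation_le hE) => S; apply: dd.
- by move=> crd f g l z x xg mw xdg xf; apply: (compBz_chain ii mw xf) => S; apply: crd.
- by move=> wcrd f g l z x xg mw xdg xf; apply: (compBz_chain ii mw.1 xf) => S; apply: wcrd.
Qed.
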